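(* Let $G=(V,E)$ be a connected chordal graph of maximum degree $\Delta$ and let $U\subseteq V$ be a nonempty self-contained set. For $v\in U$, let $p_v$ be the fraction of ordered pairs $(a,b)\in U^2$ such that $v$ lies on some shortest path in $G$ between $a$ and $b$. Then $\max_{v\in U}p_v\ge \frac{1}{2(\Delta+1)}$.
   Context: $\delta$ is the shortest-path metric of the unweighted graph $G$. A graph is chordal if every cycle of length greater than three has a chord. A set $U\subseteq V$ is self-contained if for every $(x,y)\in U^2$, every shortest path in $G$ between $x$ and $y$ uses only vertices of $U$. A vertex lies on a path if it is one of its vertices (including endpoints). *)

From HB Require Import structures.
From mathcomp Require Import all_boot all_order all_algebra.
From Stdlib Require Import ClassicalDescription.
Set Implicit Arguments. Unset Strict Implicit. Unset Printing Implicit Defensive.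
Import Order.TTheory GRing.Theory Num.Theory.

Section Graphs.
Variable T : finType.
Variable e : rel T.

Definition simple_graph : Prop := symmetric e /\ irreflexive e.

Definition connected_graph : Prop := forall x y : T, connect e x y.

Definition degree (v : T) : nat := #|[set w | e v w]|.
Definition maxdeg : nat := \max_(v : T) degree v.

(* a walk a :: p from a to b *)
Definition walk (a b : T) (p : seq T) : bool := path e a p && (last a p == b).

Definition shortest_path (a b : T) (p : seq T) : Prop :=
  walk a b p /\ forall q, walk a b q -> size p <= size q.

Definition on_shortest_path (v a b : T) : Prop :=
  exists p, shortest_path a b p /\ v \in a :: p.

Definition has_chord (c : seq T) : bool :=
  [exists x : T, exists y : T,
     [&& x \in c, y \in c, e x y, y != next c x & y != prev c x]].
Definition chordal : Prop :=
  forall c : seq T, uniq c -> cycle e c -> 3 < size c -> has_chord c.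

Definition self_contained (U : {set T}) : Prop :=
  forall a b, a \in U -> b \in U ->
  forall p, shortest_path a b p -> {subset a :: p <= U}.

Definition pbool (P : Prop) : bool :=
  if excluded_middle_informative P then true else false.

Definition pairs_through (U : {set T}) (v : T) : {set T * T} :=
  [set ab | [&& ab.1 \in U, ab.2 \in U & pbool (on_shortest_path v ab.1 ab.2)]].

Definition frac_through (U : {set T}) (v : T) : rat :=
  (#|pairs_through U v|%:R / (#|U| ^ 2)%:R)%R.

End Graphs.

From HB Require Import structures.
From mathcomp Require Import all_boot all_order all_algebra.
From mathcomp Require Import zify.
From Stdlib Require Import ClassicalDescription.
Import Order.TTheory GRing.Theory Num.Theory.
Set Implicit Arguments. Unset Strict Implicit. Unset Printing Implicit Defensive.

(* The heart of the argument is a balanced clique separator of U.  Chordal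
   graphs have no induced cycle of length > 3 (chordal_no_induced_cycle).
   From this and shortest paths inside a connected set C we get that a clique
   S outside C, all of whose vertices see C, has a common neighbour in C
   (clique_common_neighbour).  Choosing a nonempty clique K of U minimising
   the largest component of U \ K, such a common neighbour lets us split any
   component containing more than half of U, so every component of U \ K
   has at most |U|/2 vertices (balanced_clique).

   Counting then finishes the proof: a shortest path between two vertices of
   U stays in U, so either it meets K, or its ends lie in one component of
   U \ K.  Hence |U|^2 <= |U|^2/2 + |K| * max_k N(k), where N(k) counts the
   pairs through k, and |K| <= Delta + 1 as K is a clique. *)

Section ChordalCycles.
Variables (T : finType) (e : rel T).
Hypothesis e_chordal : chordal e.

Lemma chordal_no_induced_cycle (g : nat -> T) (m : nat) :
  3 < m -> {in gtn m &, injective g} ->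
  (forall i, i.+1 < m -> e (g i) (g i.+1)) -> e (g m.-1) (g 0) ->
  (forall i j, i < m -> j < m -> e (g i) (g j) ->
     [\/ j = i.+1, i = j.+1, i = 0 /\ j = m.-1 | j = 0 /\ i = m.-1]) ->
  False.
Proof.
move=> m3 ginj gnext gclose gonly.
set c := mkseq g m.
have uc : uniq c by apply/mkseq_uniqP.
have sc : size c = m by rewrite size_mkseq.
have nthc i : i < m -> nth (g 0) c i = g i by move=> im; rewrite nth_mkseq.
have gc i : i < m -> g i \in c by move=> im; rewrite -(nthc i im) mem_nth ?sc.
have cc : cycle e c.
  rewrite (cycle_path (g 0)) -nth_last sc nthc; last by lia.
  apply/(pathP (g 0)) => i; rewrite sc => im.
  case: i im => [|i] im /=; first by rewrite nthc //; lia.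
  by rewrite !nthc ?gnext //; lia.
have memc x : x \in c -> exists2 i, i < m & x = g i.
  move=> xc; exists (index x c); first by rewrite -sc index_mem.
  by rewrite -nthc ?nth_index // -sc index_mem.
have nextg i : i < m -> next c (g i) = g (if i.+1 < m then i.+1 else 0).
  move=> im; rewrite next_nth gc // -(nthc i im) index_uniq ?sc // nthc //.
  case Ec: c => [|y p]; first by move: sc; rewrite Ec /=; lia.
  have -> : y = g 0 by rewrite -nthc ?Ec //; lia.
  case: ifP => ii; first by rewrite -(nthc i.+1) // Ec.
  by rewrite nth_default //; move: sc; rewrite Ec /=; lia.
have /existsP[x /existsP[y /and5P[xc yc exy ynx ypx]]] := e_chordal uc cc (ltac:(lia)).
have [i im Ei] := memc x xc; have [j jm Ej] := memc y yc; subst x y.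
rewrite nextg // in ynx.
have prevg a b : b < m -> next c (g a) = g b -> prev c (g b) = g a.
  by move=> _ <-; rewrite prev_next.
case: (gonly i j im jm exy) => [Hj|Hi|[Hi Hj]|[Hj Hi]].
- by move: ynx; rewrite -Hj jm eqxx.
- by move: ypx; rewrite (prevg j i) ?eqxx // nextg // -Hi im.
- by move: ypx; rewrite (prevg j i) ?eqxx // nextg // Hi Hj prednK ?ltnn //; lia.
- by move: ynx; rewrite Hj Hi prednK ?ltnn ?eqxx //; lia.
Qed.
End ChordalCycles.

(* The least natural number satisfying P, or 0 if there is none. *)
Definition least (P : pred nat) : nat :=
  match excluded_middle_informative (exists n, P n) with
  | left H => ex_minn H | right _ => 0 end.

Lemma leastP (P : pred nat) n : P n -> P (least P) /\ forall m, P m -> least P <= m.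
Proof.
move=> Pn; rewrite /least; case: excluded_middle_informative => [H|[]]; last by exists n.
by case: ex_minnP.
Qed.

Section Distance.
Variables (T : finType) (r : rel T).

Definition reach (x v : T) (n : nat) : bool :=
  [exists p : n.-tuple T, path r x p && (last x p == v)].

(* The length of a shortest r-walk from x to v (0 if there is none). *)
Definition dist (x v : T) : nat := least (reach x v).

Lemma reachP x v n :
  reflect (exists p, [/\ size p = n, path r x p & last x p = v]) (reach x v n).
Proof.
apply: (iffP existsP) => [[p /andP[pp /eqP lp]]|[p [sp pp lp]]].
  by exists p; rewrite size_tuple.
have sp' : size p == n by rewrite sp.
by exists (Tuple sp') => /=; rewrite pp lp eqxx.
Qed.

Lemma dist_min x p : path r x p -> dist x (last x p) <= size p.
Proof.
move=> pp; have R : reach x (last x p) (size p) by apply/reachP; exists p.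
by have [_ ->] := leastP R.
Qed.

Lemma dist_path x v : connect r x v ->
  exists p, [/\ size p = dist x v, path r x p & last x p = v].
Proof.
case/connectP=> p pp lp.
have R : reach x v (size p) by apply/reachP; exists p.
by have [/reachP] := leastP R.
Qed.

Lemma dist_edge x v w : connect r x v -> r v w -> dist x w <= (dist x v).+1.
Proof.
move=> /dist_path[p [sp pp lp]] rvw.
have := @dist_min x (rcons p w); rewrite last_rcons size_rcons sp; apply.
by rewrite rcons_path pp lp.
Qed.

Lemma dist0 x v : connect r x v -> dist x v = 0 -> v = x.
Proof.
move=> /dist_path[p [sp _ lp]] d0.
by move: sp lp; rewrite d0; case: p.
Qed.

Lemma dist_pred x v : connect r x v -> 0 < dist x v ->
  exists u, [/\ r u v, connect r x u & (dist x u).+1 = dist x v].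
Proof.
move=> /dist_path[p [sp pp lp]] dp.
case/lastP: p sp pp lp => [|p w] sp pp lp; first by move: sp dp => /= <-.
rewrite last_rcons in lp; subst w.
move: pp; rewrite rcons_path => /andP[pp ru].
have cu : connect r x (last x p) by apply/connectP; exists p.
exists (last x p); split => //; apply/eqP.
by rewrite eqn_leq -{1}sp size_rcons ltnS dist_min //= dist_edge.
Qed.

Lemma geodesic x v : connect r x v ->
  exists h : nat -> T, [/\ h (dist x v) = v,
    forall i, i <= dist x v -> connect r x (h i) /\ dist x (h i) = i &
    forall i, i < dist x v -> r (h i) (h i.+1)].
Proof.
move Dn: (dist x v) => n; elim: n v Dn => [|n IH] v Dn cv.
  by exists (fun=> v); split => // i; rewrite leqn0 => /eqP->.
have [u [ruv cu du]] := dist_pred cv (ltac:(by rewrite Dn)).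
have [h [hu hdist hedge]] := IH u (ltac:(lia)) cu.
exists (fun i => if i == n.+1 then v else h i); split => [|i|i]; rewrite ?eqxx //.
  by case: eqP => [->|/eqP ni iv]; [rewrite Dn|apply: hdist; lia].
rewrite ltnS => i_n; rewrite eqSS ifN; last by lia.
by case: eqP => [->|/eqP ni]; [rewrite hu|apply: hedge; lia].
Qed.
End Distance.

Section ChordalGraphs.
Variables (T : finType) (e : rel T).
Hypotheses (e_sym : symmetric e) (e_irr : irreflexive e) (e_chordal : chordal e).
Implicit Types (C K S U W : {set T}).

Definition induced W : rel T := fun u v => [&& u \in W, v \in W & e u v].

Lemma induced_sym W : symmetric (induced W).
Proof. by move=> u v; rewrite /induced e_sym andbCA. Qed.

Lemma connect_closed (r : rel T) (Q : pred T) a b :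
  Q a -> (forall u v, Q u -> r u v -> Q v) -> connect r a b -> Q b.
Proof.
move=> Qa Qr /connectP[p pp ->]; elim: p a Qa pp => //= v p IH a Qa /andP[rav pp].
exact: IH (Qr _ _ Qa rav) pp.
Qed.

Lemma connect_induced_in W a b : a \in W -> connect (induced W) a b -> b \in W.
Proof. by move=> aW; apply: connect_closed aW _ => u v _ /and3P[]. Qed.

Definition component W (a : T) : {set T} :=
  [set b in W | connect (induced W) a b].

Lemma component_sub W a : component W a \subset W.
Proof. by apply/subsetP => b; rewrite inE => /andP[]. Qed.

Lemma mem_component W a : a \in W -> a \in component W a.
Proof. by move=> aW; rewrite inE aW connect0. Qed.

Lemma component_closed W a b w :
  b \in component W a -> w \in W -> e b w -> w \in component W a.
Proof.
rewrite !inE => /andP[bW cab] wW ebw; rewrite wW /=.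
by apply: connect_trans cab (connect1 _); rewrite /induced bW wW.
Qed.

Lemma path_induced_closed W (Q : {set T}) a p :
  a \in Q -> (forall u v, u \in Q -> induced W u v -> v \in Q) ->
  path (induced W) a p -> path (induced Q) a p.
Proof.
move=> aQ Qcl; elim: p a aQ => //= v p IH a aQ /andP[eav pp].
have vQ := Qcl _ _ aQ eav; case/and3P: eav => _ _ eav.
by rewrite /induced aQ vQ eav /= IH.
Qed.

Lemma component_connected W a c1 c2 : a \in W ->
  c1 \in component W a -> c2 \in component W a ->
  connect (induced (component W a)) c1 c2.
Proof.
move=> aW; set A := component W a.
have from_a c : c \in A -> connect (induced A) a c.
  rewrite inE => /andP[_ /connectP[p pp ->]]; apply/connectP; exists p => //.
  apply: path_induced_closed (mem_component aW) _ pp => u v uA /and3P[_ vW euv].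
  exact: component_closed uA vW euv.
move=> c1A c2A; apply: connect_trans (from_a _ c2A).
by rewrite (sym_connect_sym (induced_sym _)) from_a.
Qed.

Lemma component_sub_closed W (Q : {set T}) b : b \in Q ->
  (forall u v, u \in Q -> u \in W -> v \in W -> e u v -> v \in Q) ->
  component W b \subset Q.
Proof.
move=> bQ Qcl; apply/subsetP => w; rewrite inE => /andP[_].
by apply: connect_closed bQ _ => u v uQ /and3P[uW vW euv]; apply: Qcl uQ uW vW euv.
Qed.

Definition induced_path (h : nat -> T) (D : nat) : Prop :=
  [/\ forall i j, i <= D -> j <= D -> h i = h j -> i = j,
      forall i, i < D -> e (h i) (h i.+1) &
      forall i j, i <= D -> j <= D -> e (h i) (h j) -> j <= i.+1].

Lemma induced_geodesic C x y :
  x \in C -> connect (induced C) x y ->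
  let D := dist (induced C) x y in
  exists h : nat -> T, [/\ h 0 = x, h D = y,
    forall i, i <= D -> h i \in C /\ dist (induced C) x (h i) = i &
    induced_path h D].
Proof.
move=> xC cxy D; have [h [hy hdist hedge]] := geodesic cxy.
have hC i : i <= D -> h i \in C.
  by move=> iD; apply: connect_induced_in xC (hdist i iD).1.
exists h; split => // [|i iD|]; first exact: dist0 (hdist 0 _).1 (hdist 0 _).2.
  by rewrite hC //; case: (hdist i iD).
split=> [i j iD jD hij|i iD|i j iD jD eij].
- by rewrite -(hdist i iD).2 -(hdist j jD).2 hij.
- by case/and3P: (hedge i iD).
rewrite -(hdist i iD).2 -(hdist j jD).2.
by apply: dist_edge (hdist i iD).1 _; rewrite /induced !hC ?eij.
Qed.

Definition close_path (h : nat -> T) D t s (k : nat) : T :=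
  if k == 0 then t else if k <= D.+1 then h k.-1 else s.

Lemma close_pathP (h : nat -> T) D t s k : k < D.+3 ->
  let g := close_path h D t s in
  [\/ k = 0 /\ g k = t, [/\ 0 < k, k <= D.+1 & g k = h k.-1] | k = D.+2 /\ g k = s].
Proof.
rewrite /close_path => kD; case: eqP => [->|k0]; first by constructor 1.
by case: ifP => kle; [constructor 2; split => //; lia|constructor 3; split => //; lia].
Qed.

(* Closing an induced path h 0 -- ... -- h D (D > 0) by two adjacent outside
   vertices t ~ h 0 and s ~ h D, each seeing only its own end of the path,
   would give an induced cycle of length D + 3 > 3. *)
Lemma induced_path_no_cycle (h : nat -> T) D t s :
  induced_path h D -> 0 < D ->
  (forall i, i <= D -> h i != t /\ h i != s) -> t != s ->
  e s t -> e t (h 0) -> e (h D) s ->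
  (forall i, 0 < i <= D -> ~~ e t (h i)) -> (forall i, i < D -> ~~ e (h i) s) ->
  False.
Proof.
move=> [hinj hedge honly] D0 hts ts est eth ehs tonly sonly.
have gcase := @close_pathP h D t s.
apply: (@chordal_no_induced_cycle T e e_chordal (close_path h D t s) D.+3) => //.
- move=> a b; rewrite !inE => am bm.
  have [[-> ->]|[a1 a2 ->]|[-> ->]] := gcase a am;
  have [[-> ->]|[b1 b2 ->]|[-> ->]] := gcase b bm => // gab.
  + by case: (hts b.-1 (ltac:(lia))); rewrite -gab eqxx.
  + by move: ts; rewrite gab eqxx.
  + by case: (hts a.-1 (ltac:(lia))); rewrite gab eqxx.
  + by have := hinj a.-1 b.-1 (ltac:(lia)) (ltac:(lia)) gab; lia.
  + by case: (hts a.-1 (ltac:(lia))); rewrite gab eqxx.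
  + by move: ts; rewrite gab eqxx.
  + by case: (hts b.-1 (ltac:(lia))); rewrite -gab eqxx.
- move=> k kD; have [[-> _]|[k1 k2 ->]|[kD2 _]] := gcase k (ltnW kD); last by lia.
  + by rewrite /close_path.
  have [[//]|[_ kk ->]|[kD2 ->]] := gcase k.+1 kD.
    by have := hedge k.-1; rewrite /= prednK //; apply; lia.
  by rewrite (_ : k.-1 = D) //; lia.
- by rewrite /close_path /= ifN; [|lia].
- move=> a b am bm.
  have [[-> ->]|[a1 a2 ->]|[-> ->]] := gcase a am;
  have [[-> ->]|[b1 b2 ->]|[-> ->]] := gcase b bm => eab.
  + by rewrite e_irr in eab.
  + by constructor 1; have := tonly b.-1; rewrite eab; lia.
  + by constructor 3.
  + by constructor 2; have := tonly a.-1; rewrite e_sym eab; lia.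
  + have := honly a.-1 b.-1 (ltac:(lia)) (ltac:(lia)) eab.
    rewrite e_sym in eab; have := honly b.-1 a.-1 (ltac:(lia)) (ltac:(lia)) eab.
    have : a != b by apply: contraTneq eab => ->; rewrite e_irr.
    by case: (ltngtP a b) => ab *; [constructor 1|constructor 2|]; lia.
  + by constructor 1; have := sonly a.-1; rewrite eab; lia.
  + by constructor 4.
  + by constructor 2; have := sonly b.-1; rewrite e_sym eab; lia.
  + by rewrite e_irr in eab.
Qed.

Lemma induced_path_fan (h : nat -> T) D t s :
  induced_path h D -> (forall i, i <= D -> h i != t /\ h i != s) -> t != s ->
  e s t -> e t (h 0) -> e (h D) s -> (forall i, i < D -> ~~ e (h i) s) ->
  e t (h D).
Proof.
move=> [hinj hedge honly] hts ts est eth ehs sonly.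
(* the last vertex j of the path adjacent to t *)
pose P k := (k <= D) && e t (h k).
have P0 : exists k, P k by exists 0; rewrite /P leq0n eth.
have Pbound k : P k -> k <= D by case/andP.
have [j /andP[jD etj] jmax] := ex_maxnP P0 Pbound.
have [jD_eq|jlt] := eqVneq j D; first by rewrite -jD_eq.
exfalso; apply: (@induced_path_no_cycle (fun i => h (j + i)) (D - j) t s) => //.
- split=> [a b aD bD /hinj|i iD|a b aD bD /honly]; try lia.
  by rewrite addnS hedge //; lia.
- by lia.
- by move=> i iD; apply: hts; lia.
- by rewrite addn0.
- by rewrite subnKC.
- by move=> i /andP[i0 iD]; apply/negP => eti; have := jmax (j + i); rewrite /P eti andbT; lia.
- by move=> i iD; apply: sonly; lia.
Qed.

Definition clique K : bool :=
  [forall x in K, forall y in K, (x != y) ==> e x y].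

Lemma cliqueP K :
  reflect (forall x y, x \in K -> y \in K -> x != y -> e x y) (clique K).
Proof.
apply: (iffP forallP) => [H x y xK yK nxy|H x].
  by move: (H x); rewrite xK /= => /forallP/(_ y); rewrite yK nxy.
by apply/implyP => xK; apply/forall_inP => y yK; apply/implyP; apply: H.
Qed.

(* A vertex x of C with the most
   neighbours in S works: were x not adjacent to s in S, the vertex y of C
   adjacent to s closest to x would see, by induced_path_fan along a
   shortest x-y path, all neighbours of x in S, and s in addition. *)
Lemma clique_common_neighbour C S x0 :
  x0 \in C -> (forall c1 c2, c1 \in C -> c2 \in C -> connect (induced C) c1 c2) ->
  clique S -> (forall s, s \in S -> s \notin C) ->
  (forall s, s \in S -> exists2 c, c \in C & e s c) ->
  exists2 x, x \in C & forall s, s \in S -> e x s.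
Proof.
move=> x0C Cconn /cliqueP Scl SnC Snb.
pose NS z := S :&: [set w | e z w].
pose x := [arg max_(z > x0 in C) #|NS z|].
have [xC xmax] : x \in C /\ forall z, z \in C -> #|NS z| <= #|NS x|.
  by rewrite /x; case: arg_maxnP.
exists x => // s sS; apply/negPn/negP => nxs.
pose Y := [set z in C | e z s].
have [c cC esc] := Snb s sS.
have cY : c \in Y by rewrite inE cC e_sym.
pose y := [arg min_(z < c in Y) dist (induced C) x z].
have [yY ymin] : y \in Y /\ forall z, z \in Y -> dist (induced C) x y <= dist (induced C) x z.
  by rewrite /y; case: arg_minnP.
have [yC eys] : y \in C /\ e y s by move: yY; rewrite inE => /andP[].
have [h [hx hy hdist hpath]] := induced_geodesic xC (Cconn x y xC yC).
set D := dist (induced C) x y in hy hdist hpath ymin.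
have sonly i : i < D -> ~~ e (h i) s.
  move=> iD; apply/negP => ehs; have [hC hd] := hdist i (ltnW iD).
  by have := ymin (h i); rewrite inE hC ehs hd; lia.
have NSxy : NS x \subset NS y.
  apply/subsetP => t; rewrite !inE => /andP[tS ext]; rewrite tS /=.
  have ts : t != s by apply: contraNneq nxs => <-.
  have hts i : i <= D -> h i != t /\ h i != s.
    by case/hdist => hC _; split; apply: contraTneq hC => ->; apply: SnC.
  rewrite e_sym -hy; apply: (induced_path_fan (s := s) hpath) => //.
  - by apply: Scl; rewrite // eq_sym.
  - by rewrite hx e_sym.
  - by rewrite hy.
have /proper_card : NS x \proper NS y.
  by apply/properP; split => //; exists s; rewrite !inE sS ?eys // (negbTE nxs).
by rewrite ltnNge xmax.
Qed.

Definition max_component U K : nat :=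
  \max_(a in U :\: K) #|component (U :\: K) a|.

Lemma component_shielded U K K' a b :
  let C := component (U :\: K) a in
  (forall v c, v \in K -> c \in C -> e v c -> v \in K') -> b \in U :\: K' ->
  component (U :\: K') b \subset (if b \in C then C :\: K' else U :\: C).
Proof.
move=> C shield /setDP[bU bK']; case: ifP => bC; apply: component_sub_closed.
- by rewrite in_setD bC bK'.
- move=> u v /setDP[uC _] _ /setDP[vU vK'] euv; rewrite in_setD vK' /=.
  have vK : v \notin K by apply: contra vK' => vK; apply: shield vK uC _; rewrite e_sym.
  by rewrite (component_closed uC) // in_setD vK vU.
- by rewrite in_setD bC bU.
- move=> u v /setDP[_ uC] /setDP[uU uK'] /setDP[vU _] euv.
  rewrite in_setD vU andbT; apply/negP => vC.
  have uK : u \notin K by apply: contra uK' => uK; apply: shield uK vC euv.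
  by move: uC; rewrite (component_closed vC) ?in_setD ?uK ?uU // e_sym.
Qed.

(* A component C of U \ K that contains more than half of U can be
   cut down: with S the vertices of K adjacent to C and x a vertex of C
   adjacent to all of S, the clique x + S leaves components lying either in
   C \ x or in U \ C, hence all smaller than C. *)
Lemma shrink_large_component U K a :
  K \subset U -> clique K -> a \in U :\: K ->
  let C := component (U :\: K) a in #|U| < 2 * #|C| ->
  exists K', [/\ K' \subset U, K' != set0, clique K' & max_component U K' < #|C|].
Proof.
move=> KU /cliqueP Kcl aUK C big.
have aC : a \in C := mem_component aUK.
have CUK : C \subset U :\: K := component_sub _ _.
have CU : C \subset U by apply: subset_trans CUK (subsetDl _ _).
pose S := [set s in K | [exists c in C, e s c]].
have SK : S \subset K by apply/subsetP => s; rewrite inE => /andP[].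
have [x xC xS] : exists2 x, x \in C & forall s, s \in S -> e x s.
  apply: (clique_common_neighbour aC).
  - by move=> c1 c2; apply: component_connected.
  - by apply/cliqueP => s1 s2 /(subsetP SK) s1K /(subsetP SK); apply: Kcl.
  - move=> s /(subsetP SK) sK; apply: contraL sK => /(subsetP CUK).
    by rewrite inE => /andP[].
  - by move=> s; rewrite inE => /andP[_ /exists_inP[c]]; exists c.
pose K' := x |: S.
have shield v c : v \in K -> c \in C -> e v c -> v \in K'.
  by move=> vK cC evc; rewrite !inE vK /=; apply/orP; right; apply/exists_inP; exists c.
exists K'; split.
- by rewrite subUset sub1set (subsetP CU) // (subset_trans SK).
- by apply/set0Pn; exists x; rewrite !inE eqxx.
- apply/cliqueP => y z /setU1P[->|yS] /setU1P[->|zS] yz.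
  + by rewrite eqxx in yz.
  + exact: xS.
  + by rewrite e_sym xS.
  + by apply: Kcl yz; apply: (subsetP SK).
have Cpos : 0 < #|C| by apply/card_gt0P; exists a.
rewrite /max_component -(prednK Cpos) ltnS; apply/bigmax_leqP => b bUK'.
rewrite -ltnS prednK //; apply: leq_ltn_trans (subset_leq_card (component_shielded shield bUK')) _.
case: ifP => _; rewrite -/C; last by rewrite cardsDS //; lia.
apply: proper_card; apply/properP; split; first exact: subsetDl.
by exists x; rewrite // in_setD !inE eqxx.
Qed.

(* Take a clique minimising the largest remaining component. *)
Lemma balanced_clique U : U != set0 ->
  exists K, [/\ K \subset U, K != set0, clique K &
    forall a, a \in U :\: K -> 2 * #|component (U :\: K) a| <= #|U|].
Proof.
case/set0Pn=> u uU.
pose P K := [&& K \subset U, K != set0 & clique K].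
have Pu : P [set u].
  rewrite /P sub1set uU /=; apply/andP; split; first by apply/set0Pn; exists u; rewrite inE.
  by apply/cliqueP => x y /set1P-> /set1P->; rewrite eqxx.
pose K := [arg min_(K < [set u] | P K) max_component U K].
have [/and3P[KU Kn0 Kcl] Kmin] : P K /\ forall K', P K' -> max_component U K <= max_component U K'.
  by rewrite /K; case: arg_minnP.
exists K; split => // a aUK; rewrite leqNgt; apply/negP => big.
have [K' [K'U K'n0 K'cl small]] := shrink_large_component KU Kcl aUK big.
have := leq_ltn_trans (Kmin K' (ltac:(by rewrite /P K'U K'n0 K'cl))) small.
by rewrite ltnNge (leq_bigmax_cond (F := fun a => #|component (U :\: K) a|)).
Qed.
End ChordalGraphs.

Lemma card_bigcup_le (I T : finType) (P : pred I) (F : I -> {set T}) :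
  #|\bigcup_(i | P i) F i| <= \sum_(i | P i) #|F i|.
Proof.
elim/big_rec2: _ => [|i n A _ le]; first by rewrite cards0.
by apply: leq_trans (leq_card_setU _ _).1 _; rewrite leq_add2l.
Qed.

Lemma pboolT (P : Prop) : P -> pbool P.
Proof. by rewrite /pbool; case: excluded_middle_informative. Qed.

Section Counting.
Variables (T : finType) (e : rel T).
Implicit Types (K U : {set T}).

Lemma shortest_path_exists a b : connect e a b -> exists p, shortest_path e a b p.
Proof.
move=> /dist_path[p [sp pp lp]]; exists p; split; first by rewrite /walk pp lp eqxx.
by move=> q /andP[qp /eqP lq]; rewrite sp -lq dist_min.
Qed.

(* A clique lies in the closed neighbourhood of any of its vertices. *)
Lemma clique_card K k : clique e K -> k \in K -> #|K| <= maxdeg e + 1.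
Proof.
move=> /cliqueP Kcl kK.
have sub : K \subset k |: [set w | e k w].
  apply/subsetP => w wK; rewrite !inE; case: eqVneq => //= wk.
  by apply: Kcl; rewrite // eq_sym.
apply: leq_trans (subset_leq_card sub) _.
rewrite cardsU1 addnC leq_add ?leq_b1 //.
exact: (leq_bigmax (F := degree e) k).
Qed.

(* In a connected graph, a shortest path between two vertices of a
   self-contained set U either meets K, or stays in U \ K and so joins two
   vertices of the same component of U \ K. *)
Lemma pairs_cover U K : connected_graph e -> self_contained e U ->
  setX U U \subset
    (\bigcup_(a in U :\: K) [set (a, b) | b in component e (U :\: K) a]) :|:
    \bigcup_(k in K) pairs_through e U k.
Proof.
move=> conn sc; apply/subsetP => [[a b]]; rewrite inE /= => /andP[aU bU].
have [p shp] := shortest_path_exists (conn a b).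
have [/andP[pp /eqP lp] _] := shp.
have pU : {subset a :: p <= U} by apply: sc shp.
case: (boolP (has (mem K) (a :: p))) => [/hasP[k kp kK]|/hasPn pK].
  rewrite inE; apply/orP; right; apply/bigcupP; exists k => //.
  by rewrite inE /= aU bU /=; apply: pboolT; exists p.
have pUK w : w \in a :: p -> w \in U :\: K by move=> wp; rewrite inE pK ?pU.
rewrite inE; apply/orP; left; apply/bigcupP; exists a; first by rewrite pUK ?mem_head.
apply/imsetP; exists b => //; rewrite inE pUK -?lp ?mem_last //=.
apply/connectP; exists p => //; apply: (sub_in_path (P := mem (U :\: K))) pp.
  by move=> x y xUK yUK exy; rewrite /induced xUK yUK exy.
by apply/allP => w /pUK.
Qed.

Lemma pairs_count U K : connected_graph e -> self_contained e U ->
  #|U| ^ 2 <= \sum_(a in U :\: K) #|component e (U :\: K) a| +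
              \sum_(k in K) #|pairs_through e U k|.
Proof.
move=> conn sc; rewrite expnS expn1 -cardsX.
apply: leq_trans (subset_leq_card (pairs_cover K conn sc)) _.
apply: leq_trans (leq_card_setU _ _).1 _.
apply: leq_add; apply: leq_trans (card_bigcup_le _ _) _ => //.
by apply: leq_sum => a _; apply: leq_imset_card.
Qed.

Lemma frac_through_ge U v m : 0 < #|U| -> 0 < m ->
  #|U| ^ 2 <= m * #|pairs_through e U v| -> (1 / m%:R <= frac_through e U v)%R.
Proof.
move=> U0 m0 le; rewrite /frac_through ler_pdivlMr ?ltr0n ?expn_gt0 ?U0 //.
by rewrite mul1r mulrC ler_pdivrMr ?ltr0n // -natrM ler_nat mulnC.
Qed.
End Counting.

Theorem lemma14 (T : finType) (e : rel T) (U : {set T}) :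
  simple_graph e -> connected_graph e -> chordal e ->
  U != set0 -> self_contained e U ->
  exists2 v, v \in U &
    (1 / (2 * (maxdeg e + 1))%:R <= frac_through e U v)%R.
Proof.
move=> [e_sym e_irr] conn ch Un0 sc.
have [K [KU Kn0 Kcl Kbal]] := balanced_clique e_sym e_irr ch Un0.
have [k0 k0K] := set0Pn _ Kn0.
pose N k := #|pairs_through e U k|.
pose v := [arg max_(k > k0 in K) N k].
have [vK vmax] : v \in K /\ forall k, k \in K -> N k <= N v.
  by rewrite /v; case: arg_maxnP.
have comp_pairs : 2 * \sum_(a in U :\: K) #|component e (U :\: K) a| <= #|U| ^ 2.
  rewrite big_distrr; apply: (@leq_trans (\sum_(a in U :\: K) #|U|)).
    exact: leq_sum.
  by rewrite sum_nat_const expnS expn1 leq_mul2r subset_leq_card ?orbT ?subsetDl.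
have K_pairs : \sum_(k in K) N k <= (maxdeg e + 1) * N v.
  apply: (@leq_trans (\sum_(k in K) N v)); first exact: leq_sum.
  by rewrite sum_nat_const leq_mul2r (clique_card Kcl k0K) orbT.
have count := pairs_count K conn sc.
exists v; first exact: (subsetP KU).
apply: frac_through_ge; rewrite ?card_gt0 ?muln_gt0 ?addn1 //.
move: count comp_pairs K_pairs; rewrite /N; lia.
Qed.
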